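(* Let $G$ and $H$ be Hausdorff locally quasi-convex abelian groups. Then the dual groups of $G\otimes H$ and of $G\otimes_{\mathcal Q}H$ are (algebraically) isomorphic to $\mathbb X(G,H)$, the group of all continuous bicharacters of $G\times H$: $\widehat{G\otimes H}\simeq\widehat{G\otimes_{\mathcal Q}H}\simeq\mathbb X(G,H)$.
   Context: $\mathbb T=\mathbb R/\mathbb Z$; a character is a continuous homomorphism into $\mathbb T$ and $\widehat L$ denotes the group of characters of $L$. A continuous bihomomorphism $b:G\times H\to L$ is separately a continuous homomorphism in each variable and continuous at $(0,0)$; a continuous bicharacter is a continuous bihomomorphism into $\mathbb T$. $G\otimes H$ is the tensor product in the category of all topological abelian groups: the quotient $A(G\times H)/N$ of the free abelian topological group on the space $G\times H$ by the subgroup $N$ generated by all $\sigma(a+b,c)-\sigma(a,c)-\sigma(b,c)$ and $\sigma(a,c+d)-\sigma(a,c)-\sigma(a,d)$ ($\sigma$ the canonical map), with $\otimes$ the composite of $\sigma$ and the quotient map. A subset $A$ of $L$ is quasi-convex if for every $g\notin A$ there is a character $\chi$ with $|\chi(a)|\le1/4$ on $A$ and $|\chi(g)|>1/4$; $\mathcal Q$ is the class of Hausdorff abelian groups with a basis at $0$ of quasi-convex sets. For $G,H\in\mathcal Q$, $G\otimes_{\mathcal Q}H$ is the group in $\mathcal Q$ with a continuous bihomomorphism $\otimes_{\mathcal Q}:G\times H\to G\otimes_{\mathcal Q}H$ through which every continuous bihomomorphism into a group of $\mathcal Q$ factors via a unique continuous homomorphism (unique up to topological isomorphism). *)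

(* Topologies are handled explicitly as families of open
   sets (predicates), since the paper's constructions (free abelian
   topological group, quotient topology, tensor products) produce new
   topologies on existing carriers. *)
From HB Require Import structures.
From mathcomp Require Import all_boot all_order all_algebra.
From mathcomp Require Import boolp.
From Stdlib Require Rdefinitions.
From mathcomp Require Import Rstruct.
Notation R := Rdefinitions.R.
From mathcomp.multinomials Require Import freeg.

Set Implicit Arguments.
Unset Strict Implicit.
Unset Printing Implicit Defensive.

Import Order.TTheory GRing.Theory Num.Theory.
Local Open Scope ring_scope.
Local Open Scope quotient_scope.

Definition opens (T : Type) := (T -> Prop) -> Prop.

Definition is_topology {T : Type} (O : opens T) : Prop :=
  [/\ O (fun _ => True),
      (forall A B, O A -> O B -> O (fun x => A x /\ B x)) &
      (forall F : (T -> Prop) -> Prop,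
          (forall A, F A -> O A) -> O (fun x => exists A, F A /\ A x))].

Definition generated {T : Type} (B : opens T) : opens T :=
  fun U => forall O, is_topology O -> (forall A, B A -> O A) -> O U.

Definition continuous {S T : Type} (OS : opens S) (OT : opens T)
  (f : S -> T) : Prop :=
  forall V, OT V -> OS (fun x => V (f x)).

Definition continuous_at {S T : Type} (OS : opens S) (OT : opens T)
  (f : S -> T) (x : S) : Prop :=
  forall V, OT V -> V (f x) ->
    exists U, [/\ OS U, U x & forall y, U y -> V (f y)].

Definition prod_top {S T : Type} (OS : opens S) (OT : opens T) : opens (S * T) :=
  generated (fun W => (exists U, OS U /\ W = (fun p => U p.1)) \/
                      (exists V, OT V /\ W = (fun p => V p.2))).

Definition hausdorff {T : Type} (O : opens T) : Prop :=
  forall x y : T, x <> y ->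
    exists U V, [/\ O U, O V, U x, V y & forall z, ~ (U z /\ V z)].

Definition top_group {Z : zmodType} (O : opens Z) : Prop :=
  is_topology O /\ continuous (prod_top O O) O (fun p => p.1 - p.2).

Definition is_hom {A B : Type} (addA : A -> A -> A) (addB : B -> B -> B)
  (f : A -> B) : Prop := forall x y, f (addA x y) = addB (f x) (f y).

(* The circle group T = R/Z, realised on representatives in [0,1)     *)

Record circ := Circ { cval : R; cvalP : (0 <= cval < 1)%R }.

Definition frac (x : R) : R := x - (Num.floor x)%:~R.

Lemma frac_itv (x : R) : (0 <= frac x < 1)%R.
Proof.
rewrite /frac subr_ge0 floor_le /= ltrBlDl.
by have := floorD1_gt x; rewrite intrD.
Qed.

Definition tzero : circ := @Circ 0 (introT andP (conj (lexx 0) ltr01)).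
Definition tadd (a b : circ) : circ := Circ (frac_itv (cval a + cval b)).

Definition cdist (s t : circ) : R :=
  Num.min `|cval s - cval t| (1 - `|cval s - cval t|).

Definition tnorm (t : circ) : R := cdist t tzero.

Definition circ_opens : opens circ :=
  fun U => forall t, U t -> exists e : R, 0 < e /\ (forall s, cdist s t < e -> U s).

Definition character {Z : Type} (addZ : Z -> Z -> Z) (O : opens Z)
  (chi : Z -> circ) : Prop :=
  is_hom addZ tadd chi /\ continuous O circ_opens chi.

Definition fadd {Z : Type} (f g : Z -> circ) : Z -> circ :=
  fun z => tadd (f z) (g z).
Definition fadd2 {X Y : Type} (f g : X -> Y -> circ) : X -> Y -> circ :=
  fun x y => tadd (f x y) (g x y).

Definition quasi_convex {L : zmodType} (O : opens L) (A : L -> Prop) : Prop :=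
  forall g, ~ A g ->
    exists chi, [/\ character +%R O chi,
                    (forall a, A a -> tnorm (chi a) <= 1 / 4 :> R) &
                    1 / 4 < tnorm (chi g) :> R].

Definition locally_quasi_convex {L : zmodType} (O : opens L) : Prop :=
  forall U, O U -> U 0 ->
    exists A, [/\ quasi_convex O A,
                  (exists V, [/\ O V, V 0 & forall x, V x -> A x]) &
                  forall x, A x -> U x].

Definition in_Q {L : zmodType} (O : opens L) : Prop :=
  [/\ top_group O, hausdorff O & locally_quasi_convex O].

Definition cont_bihom {G H : zmodType} {L : Type} (OG : opens G) (OH : opens H)
  (addL : L -> L -> L) (OL : opens L) (zeroL : L) (b : G -> H -> L) : Prop :=
  [/\ forall x, is_hom +%R addL (b x) /\ continuous OH OL (b x),
      forall y, is_hom +%R addL (fun x => b x y) /\ continuous OG OL (fun x => b x y)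
    & (b 0 0 = zeroL /\
       continuous_at (prod_top OG OH) OL (fun p => b p.1 p.2) (0, 0))].

Definition bichar {G H : zmodType} (OG : opens G) (OH : opens H)
  (b : G -> H -> circ) : Prop := cont_bihom OG OH tadd circ_opens tzero b.

Section Tensor.
Variables (G H : zmodType) (OG : opens G) (OH : opens H).

Definition FA := {freeg (G * H)%type}.
Definition sigma (p : G * H) : FA := << p >>.

(* free abelian topological group A(G x H): the finest group topology on
   the free abelian group making sigma continuous (the supremum of all
   such group topologies) *)
Definition FA_opens : opens FA :=
  generated (fun U => exists O : opens FA,
    [/\ top_group O, continuous (prod_top OG OH) O sigma & O U]).

Definition N_gen (z : FA) : Prop :=
  (exists a b c, z = sigma (a + b, c) - sigma (a, c) - sigma (b, c)) \/
  (exists a c d, z = sigma (a, c + d) - sigma (a, c) - sigma (a, d)).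

Definition N (z : FA) : Prop :=
  forall S : FA -> Prop, S 0 -> (forall x y, S x -> S y -> S (x - y)) ->
    (forall x, N_gen x -> S x) -> S z.

Lemma N0 : N 0. Proof. by move=> S S0 _ _. Qed.
Lemma NB x y : N x -> N y -> N (x - y).
Proof. rewrite /N => Nx Ny S S0 SB Sg; apply: (SB); [exact: (Nx S S0 SB Sg) | exact: (Ny S S0 SB Sg)]. Qed.

Definition Nrel (x y : FA) : bool := `[< N (x - y) >].

Lemma Nrel_refl : reflexive Nrel.
Proof. move=> x; apply/asboolP; rewrite subrr; exact: N0. Qed.
Lemma Nrel_sym : symmetric Nrel.
Proof.
suff h x y : Nrel x y -> Nrel y x by move=> x y; apply/idP/idP; apply: h.
move/asboolP=> nxy; apply/asboolP.
by have := NB N0 nxy; rewrite sub0r opprB.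
Qed.
Lemma Nrel_trans : transitive Nrel.
Proof.
move=> y x z /asboolP nxy /asboolP nyz; apply/asboolP.
have := NB nxy (NB N0 nyz); rewrite sub0r opprK.
by rewrite addrA subrK.
Qed.

Canonical Nequiv := EquivRel Nrel Nrel_refl Nrel_sym Nrel_trans.

Definition tensor := {eq_quot Nequiv}.

Definition tensor_add (a b : tensor) : tensor := \pi_tensor (repr a + repr b : FA).

Definition tensor_opens : opens tensor :=
  fun U => FA_opens (fun x => U (\pi_tensor x)).

Definition tensor_map (g : G) (h : H) : tensor := \pi_tensor (sigma (g, h)).

End Tensor.

Definition is_Q_tensor {G H : zmodType} (OG : opens G) (OH : opens H)
  (P : zmodType) (OP : opens P) (bP : G -> H -> P) : Prop :=
  [/\ in_Q OP, cont_bihom OG OH +%R OP 0 bP &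
      forall (L : zmodType) (OL : opens L) (b : G -> H -> L),
        in_Q OL -> cont_bihom OG OH +%R OL 0 b ->
        (exists f : P -> L, [/\ is_hom +%R +%R f, continuous OP OL f &
                                forall x y, b x y = f (bP x y)]) /\
        (forall f1 f2 : P -> L,
            is_hom +%R +%R f1 -> continuous OP OL f1 ->
            (forall x y, b x y = f1 (bP x y)) ->
            is_hom +%R +%R f2 -> continuous OP OL f2 ->
            (forall x y, b x y = f2 (bP x y)) -> f1 = f2)].

Definition group_iso_on {A B : Type} (DA : A -> Prop) (DB : B -> Prop)
  (addA : A -> A -> A) (addB : B -> B -> B) (phi : A -> B) : Prop :=
  [/\ forall a, DA a -> DB (phi a),
      forall a a', DA a -> DA a' -> phi a = phi a' -> a = a',
      forall b, DB b -> exists2 a, DA a & phi a = b &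
      forall a a', DA a -> DA a' -> phi (addA a a') = addB (phi a) (phi a')].

(* A character chi of G (x) H gives the bicharacter (x, y) |-> chi (x (x) y), and
   characters are determined by these values since the x (x) y generate.
   Conversely a continuous bicharacter b extends additively to the free abelian
   group on G x H and kills the relations N.  The extension is continuous for
   the free topology A(G x H), the finest group topology making sigma
   continuous, because the topology it induces by pulling back the circle is a
   group topology making sigma continuous; this needs b jointly continuous,
   which follows from biadditivity, separate continuity and continuity at
   (0, 0).  For G (x)_Q H the isomorphism is the universal property applied to
   the circle, which is in Q: the sets {|t| <= 1/(4n)} are quasi-convex, since a
   point g outside is pushed just beyond 1/4 by t |-> m t for some m <= n that
   keeps the whole set within 1/4. *)

From HB Require Import structures.
From mathcomp Require Import all_boot all_order all_algebra.
From mathcomp Require Import boolp Rstruct.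
From mathcomp.multinomials Require Import freeg.
From mathcomp Require Import ring lra.

Set Implicit Arguments.
Unset Strict Implicit.
Unset Printing Implicit Defensive.

Import Order.TTheory GRing.Theory Num.Theory.
Local Open Scope ring_scope.
Local Open Scope quotient_scope.

(** * The circle group *)

Lemma frac_id (x : R) : 0 <= x < 1 -> frac x = x.
Proof. by move=> x01; rewrite /frac (@floor_def _ x 0) ?subr0 // add0r. Qed.

Lemma fracDz (x : R) (n : int) : frac (x + n%:~R) = frac x.
Proof.
rewrite /frac (@floor_def _ (x + n%:~R) (Num.floor x + n)); first by rewrite intrD; ring.
have := floor_le x; have := floorD1_gt x.
by rewrite !intrD => *; apply/andP; split; lra.
Qed.

Lemma fracDml (x y : R) : frac (frac x + y) = frac (x + y).
Proof. by rewrite [frac x]/frac -mulrNz addrAC fracDz. Qed.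

Lemma fracDmr (x y : R) : frac (x + frac y) = frac (x + y).
Proof. by rewrite addrC fracDml addrC. Qed.

Lemma intr_trichotomy (n : int) : n = 0 \/ n%:~R <= -1 :> R \/ 1 <= n%:~R :> R.
Proof.
case: (ltrgtP n 0) => [n_lt0|n_gt0|]; last by left.
- by right; left; rewrite -[-1]/((-1)%:~R) ler_int -ltzD1 addrC subrr.
- by right; right; rewrite -[1]/(1%:~R) ler_int.
Qed.

Definition zdist (x : R) : R := Num.min (frac x) (1 - frac x).

Lemma zdist_le (x : R) (n : int) : zdist x <= `|x - n%:~R|.
Proof.
have /andP[f_ge0 f_lt1] := frac_itv x.
have -> : x - n%:~R = frac x + (Num.floor x - n)%:~R by rewrite /frac intrD mulrNz; ring.
rewrite /zdist ge_min; case: (intr_trichotomy (Num.floor x - n)) => [->|[m_le|m_ge]].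
- by rewrite addr0 ger0_norm ?lexx.
- by apply/orP; right; rewrite ler0_norm; lra.
- by apply/orP; left; rewrite ger0_norm; lra.
Qed.

Lemma zdist_attained (x : R) : exists n : int, zdist x = `|x - n%:~R|.
Proof.
have /andP[f_ge0 f_lt1] := frac_itv x; rewrite /zdist.
case: (leP (frac x) (1 - frac x)) => _.
- by exists (Num.floor x); rewrite ger0_norm.
- exists (Num.floor x + 1); rewrite ler0_norm; first by rewrite /frac intrD; ring.
  by rewrite /frac intrD in f_lt1 *; lra.
Qed.

Lemma zdist_ge0 (x : R) : 0 <= zdist x.
Proof. by have [n ->] := zdist_attained x. Qed.

Lemma zdist_le_half (x : R) : zdist x <= 1 / 2.
Proof.
by rewrite /zdist ge_min; case: (leP (frac x) (1 / 2)) => ?; apply/orP; [left|right]; lra.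
Qed.

Lemma zdistDz (x : R) (n : int) : zdist (x + n%:~R) = zdist x.
Proof. by rewrite /zdist fracDz. Qed.

Lemma zdist_frac (x : R) : zdist (frac x) = zdist x.
Proof. by rewrite [frac x]/frac -mulrNz zdistDz. Qed.

Lemma zdistN (x : R) : zdist (- x) = zdist x.
Proof.
suff le_zdistN y : zdist (- y) <= zdist y.
  by apply/eqP; rewrite eq_le le_zdistN -{1}[x]opprK le_zdistN.
have [n ->] := zdist_attained y; apply: le_trans (zdist_le _ (- n)) _.
by rewrite mulrNz -opprD normrN.
Qed.

Lemma ler_zdistD (x y : R) : zdist (x + y) <= zdist x + zdist y.
Proof.
have [n ->] := zdist_attained x; have [m ->] := zdist_attained y.
apply: le_trans (zdist_le _ (n + m)) _.
by rewrite intrD opprD addrACA; exact: ler_normD.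
Qed.

Lemma ler_zdistMn (k : nat) (x : R) : zdist (k%:R * x) <= k%:R * zdist x.
Proof.
elim: k => [|k ih].
  by rewrite !mul0r; apply: le_trans (zdist_le 0 0) _; rewrite mulr0z subr0 normr0.
by rewrite -addn1 natrD !mulrDl !mul1r; apply: le_trans (ler_zdistD _ _) (lerD ih _).
Qed.

Lemma zdist_id (x : R) : 0 <= x <= 1 / 2 -> zdist x = x.
Proof.
move=> /andP[x_ge0 x_le]; apply/eqP; rewrite eq_le.
have -> /= : zdist x <= x by have := zdist_le x 0; rewrite subr0 ger0_norm.
have [n ->] := zdist_attained x.
case: (intr_trichotomy n) => [->|[n_le|n_ge]]; first by rewrite subr0 ger0_norm.
- rewrite ger0_norm; lra.
- rewrite ler0_norm; lra.
Qed.

Lemma zdistMn_zdist (k : nat) (x : R) : zdist (k%:R * x) = zdist (k%:R * zdist x).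
Proof.
have [n ->] := zdist_attained x.
have -> : k%:R * x = k%:R * (x - n%:~R) + (n * k%:Z)%:~R by rewrite intrM; ring.
rewrite zdistDz; case: (lerP 0 (x - n%:~R)) => [?|?]; first by rewrite ger0_norm.
by rewrite ltr0_norm // mulrN zdistN.
Qed.

Lemma zdist_eq0 (x : R) : zdist x = 0 -> exists n : int, x = n%:~R.
Proof.
have [n ->] := zdist_attained x => /eqP; rewrite normr_eq0 subr_eq0 => /eqP ->.
by exists n.
Qed.

HB.instance Definition _ := [isSub for cval].
HB.instance Definition _ := [Choice of circ by <:].

Definition topp (a : circ) : circ := Circ (frac_itv (- cval a)).

Lemma frac_cval (a : circ) : frac (cval a) = cval a.
Proof. exact/frac_id/cvalP. Qed.

Lemma taddA : associative tadd.
Proof. by move=> a b c; apply: val_inj => /=; rewrite fracDmr fracDml addrA. Qed.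

Lemma taddC : commutative tadd.
Proof. by move=> a b; apply: val_inj => /=; rewrite addrC. Qed.

Lemma add0t : left_id tzero tadd.
Proof. by move=> a; apply: val_inj => /=; rewrite add0r frac_cval. Qed.

Lemma addNt : left_inverse tzero topp tadd.
Proof. by move=> a; apply: val_inj => /=; rewrite fracDml addNr frac_id // lexx ltr01. Qed.

HB.instance Definition _ := GRing.isZmodule.Build circ taddA taddC add0t addNt.

Lemma taddE (a b : circ) : tadd a b = a + b.
Proof. by []. Qed.

Lemma cvalD (a b : circ) : cval (a + b) = frac (cval a + cval b).
Proof. by []. Qed.

Lemma cvalN (a : circ) : cval (- a) = frac (- cval a).
Proof. by []. Qed.

Lemma cvalMn (a : circ) (k : nat) : cval (a *+ k) = frac (k%:R * cval a).
Proof.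
elim: k => [|k ih]; first by rewrite mul0r frac_id // lexx ltr01.
by rewrite mulrS cvalD ih fracDmr -addn1 natrD mulrDl mul1r addrC.
Qed.

Lemma tnormE (a : circ) : tnorm a = zdist (cval a).
Proof.
have /andP[a_ge0 _] := cvalP a.
by rewrite /tnorm /cdist subr0 ger0_norm // /zdist frac_cval.
Qed.

Lemma cdistE (s t : circ) : cdist s t = tnorm (s - t).
Proof.
have /andP[s_ge0 s_lt1] := cvalP s; have /andP[t_ge0 t_lt1] := cvalP t.
rewrite tnormE cvalD cvalN fracDmr zdist_frac /zdist /cdist.
case: (lerP (cval t) (cval s)) => [t_le_s|s_lt_t].
  by rewrite frac_id //; apply/andP; split; lra.
have frac_st : frac (cval s - cval t) = cval s - cval t + 1.
  by rewrite -(fracDz _ 1) frac_id //; apply/andP; split; lra.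
by rewrite frac_st minC; congr Num.min; ring.
Qed.

Lemma tnorm_ge0 (a : circ) : 0 <= tnorm a.
Proof. by rewrite tnormE zdist_ge0. Qed.

Lemma tnormD (a b : circ) : tnorm (a + b) <= tnorm a + tnorm b.
Proof. by rewrite !tnormE cvalD zdist_frac ler_zdistD. Qed.

Lemma tnormN (a : circ) : tnorm (- a) = tnorm a.
Proof. by rewrite !tnormE cvalN zdist_frac zdistN. Qed.

Lemma tnormMn (a : circ) (k : nat) : tnorm (a *+ k) <= k%:R * tnorm a.
Proof. by rewrite !tnormE cvalMn zdist_frac ler_zdistMn. Qed.

Lemma tnorm_eq0 (a : circ) : tnorm a = 0 -> a = 0.
Proof.
have /andP[a_ge0 a_lt1] := cvalP a.
rewrite tnormE => /zdist_eq0[n a_n]; apply: val_inj => /=.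
by case: (intr_trichotomy n) => [n0|[n_le|n_ge]]; [rewrite a_n n0 | lra | lra].
Qed.

Lemma cdist_ge0 (s t : circ) : 0 <= cdist s t.
Proof. by rewrite cdistE tnorm_ge0. Qed.

Lemma cdistxx (s : circ) : cdist s s = 0.
Proof. by rewrite cdistE subrr tnormE zdist_id //= lexx; lra. Qed.

Lemma cdistC (s t : circ) : cdist s t = cdist t s.
Proof. by rewrite !cdistE -tnormN opprB. Qed.

Lemma cdist_triangle (s t u : circ) : cdist s u <= cdist s t + cdist t u.
Proof. by rewrite !cdistE -[s - u](subrKA t); exact: tnormD. Qed.

(** * Topologies as families of open sets *)

Lemma opens_ext {T : Type} (O : opens T) (A B : T -> Prop) :
  O A -> (forall x, A x <-> B x) -> O B.
Proof.
move=> OA AB; suff -> : B = A by [].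
by apply: funext => x; apply: propext; split; move/AB.
Qed.

Lemma open_empty {T : Type} (O : opens T) : is_topology O -> O (fun _ => False).
Proof.
case=> _ _ O_union; apply: opens_ext (O_union (fun _ => False) _) _ => //.
by move=> x; split => // -[A []].
Qed.

Lemma generated_topology {T : Type} (B : opens T) : is_topology (generated B).
Proof.
split.
- by move=> O [].
- move=> U V gU gV O tO BO; have [_ OI _] := tO.
  exact: OI (gU O tO BO) (gV O tO BO).
- move=> F gF O tO BO; have [_ _ OU] := tO.
  by apply: OU => A /gF; exact.
Qed.

Lemma generated_open {T : Type} (B : opens T) (A : T -> Prop) : B A -> generated B A.
Proof. by move=> BA O _; exact. Qed.

Lemma continuous_generated {S T : Type} (OS : opens S) (B : opens T) (g : S -> T) :
  is_topology OS -> (forall A, B A -> OS (fun x => A (g x))) ->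
  continuous OS (generated B) g.
Proof.
move=> [OS_T OS_I OS_U] gB V gV; apply: (gV (fun A => OS (fun x => A (g x)))) => //.
split => //; first by move=> A C; exact: OS_I.
move=> F F_open.
have O_union := OS_U (fun A' => exists A, F A /\ A' = (fun x => A (g x))).
apply: opens_ext (O_union _) _ => [_ [A [FA ->]]|x]; first exact: F_open.
split.
- by case=> _ [[A [FA ->]] Agx]; exists A.
- by case=> A [FA Agx]; exists (fun x => A (g x)); split => //; exists A.
Qed.

Lemma continuous_comp {S T U : Type} (OS : opens S) (OT : opens T) (OU : opens U)
    (f : S -> T) (g : T -> U) :
  continuous OS OT f -> continuous OT OU g -> continuous OS OU (fun x => g (f x)).
Proof. by move=> f_cont g_cont V OV; exact: f_cont (g_cont V OV). Qed.

Lemma continuous_atW {S T : Type} (OS : opens S) (OT : opens T) (f : S -> T) (x : S) :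
  continuous OS OT f -> continuous_at OS OT f x.
Proof. by move=> f_cont V OV Vfx; exists (fun y => V (f y)); split => //; exact: f_cont. Qed.

Definition rect_nbhd {S T : Type} (OS : opens S) (OT : opens T)
    (W : S * T -> Prop) (p : S * T) : Prop :=
  exists A B, [/\ OS A, OT B, A p.1, B p.2 & forall q, A q.1 -> B q.2 -> W q].

Lemma prod_top_of_rect {S T : Type} (OS : opens S) (OT : opens T) (W : S * T -> Prop) :
  (forall p, W p -> rect_nbhd OS OT W p) -> prod_top OS OT W.
Proof.
move=> W_rect O [_ OI OU] sub_O.
pose F R := exists A B, [/\ OS A, OT B, (forall q, A q.1 -> B q.2 -> W q)
                          & R = (fun q => A q.1 /\ B q.2)].
apply: opens_ext (OU F _) _.
- move=> _ [A [B [OA OB _ ->]]].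
  by apply: OI; apply: sub_O; [left; exists A | right; exists B].
- move=> p; split; first by case=> _ [[A [B [_ _ AB_W ->]]] [Ap Bp]]; exact: AB_W.
  move=> /W_rect [A [B [OA OB Ap Bp AB_W]]].
  by exists (fun q => A q.1 /\ B q.2); split => //; exists A, B.
Qed.

Lemma rect_of_prod_top {S T : Type} (OS : opens S) (OT : opens T) (W : S * T -> Prop) :
  is_topology OS -> is_topology OT ->
  prod_top OS OT W -> forall p, W p -> rect_nbhd OS OT W p.
Proof.
move=> [OS_T OS_I OS_U] [OT_T OT_I OT_U] W_open.
apply: (W_open (fun W => forall p, W p -> rect_nbhd OS OT W p)); first split.
- by move=> p _; exists (fun _ => True), (fun _ => True).
- move=> U V U_rect V_rect p [/U_rect [A1 [B1 [? ? ? ? AB1]]] /V_rect [A2 [B2 [? ? ? ? AB2]]]].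
  exists (fun x => A1 x /\ A2 x), (fun y => B1 y /\ B2 y); split => //.
  + exact: OS_I.
  + exact: OT_I.
  + by move=> q [? ?] [? ?]; split; [apply: AB1 | apply: AB2].
- move=> F F_rect p [U [FU Up]]; have [A [B [? ? ? ? AB_U]]] := F_rect U FU p Up.
  by exists A, B; split => // q Aq Bq; exists U; split => //; exact: AB_U.
- move=> _ [[U [OU ->]]|[V [OV ->]]] p Wp.
  + by exists U, (fun _ => True).
  + by exists (fun _ => True), V.
Qed.

Lemma continuous_pairl {S T : Type} (OS : opens S) (OT : opens T) (x : S) :
  is_topology OT -> continuous OT (prod_top OS OT) (fun y => (x, y)).
Proof.
move=> tT; have [OT_T _ _] := tT.
apply: continuous_generated => // _ [[U [_ ->]]|[V [OV ->]]] /=.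
- case: (pselect (U x)) => Ux; first exact: opens_ext OT_T _.
  exact: opens_ext (open_empty tT) _.
- exact: opens_ext OV _.
Qed.

Lemma continuous_pairr {S T : Type} (OS : opens S) (OT : opens T) (y : T) :
  is_topology OS -> continuous OS (prod_top OS OT) (fun x => (x, y)).
Proof.
move=> tS; have [OS_T _ _] := tS.
apply: continuous_generated => // _ [[U [OU ->]]|[V [_ ->]]] /=.
- exact: opens_ext OU _.
- case: (pselect (V y)) => Vy; first exact: opens_ext OS_T _.
  exact: opens_ext (open_empty tS) _.
Qed.

(** * The circle is in Q *)

Definition cball (t : circ) (e : R) : circ -> Prop := fun s => cdist s t < e.

Lemma cball_open (t : circ) (e : R) : circ_opens (cball t e).
Proof.
move=> s st_lt_e; exists (e - cdist s t); split; first by rewrite subr_gt0.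
move=> u us_lt; apply: le_lt_trans (cdist_triangle u s t) _.
by rewrite -ltrBrDr.
Qed.

Lemma cball_center (t : circ) (e : R) : 0 < e -> cball t e t.
Proof. by rewrite /cball cdistxx. Qed.

Lemma circ_topology : is_topology circ_opens.
Proof.
split.
- by move=> t _; exists 1; split => //; exact: ltr01.
- move=> A B OA OB t [At Bt].
  have [e1 [e1_gt0 e1A]] := OA t At; have [e2 [e2_gt0 e2B]] := OB t Bt.
  exists (Num.min e1 e2); split; first by rewrite lt_min e1_gt0 e2_gt0.
  by move=> s; rewrite lt_min => /andP[? ?]; split; [apply: e1A | apply: e2B].
- move=> F F_open t [A [FA At]]; have [e [e_gt0 eA]] := F_open A FA t At.
  by exists e; split => // s /eA As; exists A.
Qed.

Lemma circ_hausdorff : hausdorff circ_opens.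
Proof.
move=> s t s_neq_t; set d := cdist s t.
have d_gt0 : 0 < d.
  rewrite lt_def cdist_ge0 andbT; apply: contra_notN s_neq_t => /eqP.
  by rewrite /d cdistE => /tnorm_eq0/subr0_eq.
have d2_gt0 : 0 < d / 2 by rewrite divr_gt0.
exists (cball s (d / 2)), (cball t (d / 2)); split;
  try exact: cball_open; try exact: cball_center.
move=> z [zs zt]; have := cdist_triangle s z t.
by rewrite (cdistC s z) -/d; move: zs zt; rewrite /cball => zs zt; lra.
Qed.

Lemma circ_sub_continuous :
  continuous (prod_top circ_opens circ_opens) circ_opens (fun p => p.1 - p.2).
Proof.
move=> V OV; apply: prod_top_of_rect => -[a b] /= Vab.
have [e [e_gt0 eV]] := OV _ Vab; have e2_gt0 : 0 < e / 2 by rewrite divr_gt0.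
exists (cball a (e / 2)), (cball b (e / 2)); split => /=;
  try exact: cball_open; try exact: cball_center.
move=> [x y] /= xa yb; apply: eV; rewrite cdistE.
have -> : x - y - (a - b) = (x - a) - (y - b).
  by rewrite !opprB addrACA [RHS]addrACA (addrC (- y)).
apply: le_lt_trans (tnormD _ _) _; rewrite tnormN -!cdistE.
by move: xa yb; rewrite /cball => xa yb; lra.
Qed.

Lemma circ_top_group : top_group circ_opens.
Proof. by split; [exact: circ_topology | exact: circ_sub_continuous]. Qed.

Lemma character_mulrn (k : nat) : character +%R circ_opens (fun t : circ => t *+ k).
Proof.
split; first by move=> s t; rewrite mulrnDl.
move=> V OV t /= Vtk; have [e [e_gt0 eV]] := OV _ Vtk.
have k1_gt0 : 0 < k.+1%:R :> R by rewrite ltr0n.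
exists (e / k.+1%:R); split; first by rewrite divr_gt0.
move=> s; rewrite ltr_pdivlMr // => st_lt; apply: eV.
rewrite cdistE -mulrnBl; apply: le_lt_trans (tnormMn _ _) _; rewrite -cdistE.
by have := cdist_ge0 s t; rewrite -addn1 natrD in st_lt *; nra.
Qed.

Lemma tnormMn_small (a : circ) (k : nat) :
  k%:R * tnorm a <= 1 / 2 -> tnorm (a *+ k) = k%:R * tnorm a.
Proof.
rewrite !tnormE cvalMn zdist_frac zdistMn_zdist => ka_le.
by rewrite zdist_id // ka_le andbT mulr_ge0 ?zdist_ge0.
Qed.

Lemma quarter_multiple (s : R) : 0 < s <= 1 / 2 ->
  exists m : nat, m%:R * s <= 1 / 4 /\ 1 / 4 < m.+1%:R * s <= 1 / 2.
Proof.
move=> /andP[s_gt0 s_le]; pose m := Num.truncn (1 / (4 * s)).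
have m_le : m%:R <= 1 / (4 * s) by rewrite truncn_le divr_ge0 //; nra.
have m_gt : 1 / (4 * s) < m.+1%:R := truncnS_gt _.
have ms_le : m%:R * s <= 1 / 4 by rewrite ler_pdivlMr ?mulr_gt0 // in m_le; nra.
have ms_gt : 1 / 4 < m.+1%:R * s by rewrite ltr_pdivrMr ?mulr_gt0 // in m_gt; nra.
exists m; split => //; apply/andP; split => //.
have [m0|m_ge1] := posnP m; first by rewrite m0 mulr1n mul1r.
have m_ge1' : 1 <= m%:R :> R by rewrite ler1n.
rewrite -addn1 natrD; nra.
Qed.

Lemma quasi_convex_tnorm_le (n : nat) : (0 < n)%N ->
  quasi_convex circ_opens (fun t => tnorm t <= (4 * n%:R)^-1).
Proof.
move=> n_gt0 g /negP; rewrite -ltNge => r_lt_g; set r := (4 * n%:R)^-1 in r_lt_g *.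
have n_gt0' : 0 < n%:R :> R by rewrite ltr0n.
have rn : r * (4 * n%:R) = 1 by rewrite mulVf //; lra.
have r_gt0 : 0 < r by rewrite invr_gt0; lra.
have g_itv : 0 < tnorm g <= 1 / 2.
  by rewrite tnormE zdist_le_half andbT -tnormE (lt_trans r_gt0).
have [m [mg_le /andP[mg_gt m1g_le]]] := quarter_multiple g_itv.
have m_lt_n : m.+1%:R <= n%:R :> R.
  rewrite ler_nat -(ltr_nat R); nra.
exists (fun t : circ => t *+ m.+1); split; first exact: character_mulrn.
- move=> a a_le; apply: le_trans (tnormMn _ _) _.
  by have := tnorm_ge0 a; nra.
- by rewrite tnormMn_small.
Qed.

Lemma circ_locally_quasi_convex : locally_quasi_convex circ_opens.
Proof.
move=> U OU U0; have [e [e_gt0 eU]] := OU 0 U0.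
pose n := (Num.truncn e^-1).+1.
have n_gt0 : 0 < n%:R :> R by rewrite ltr0n.
have r_lt_e : (4 * n%:R)^-1 < e.
  have : e^-1 < n%:R := truncnS_gt _.
  rewrite -[X in X < _ -> _]div1r -[X in _ -> X < _]div1r ltr_pdivrMr // ltr_pdivrMr; nra.
exists (fun t => tnorm t <= (4 * n%:R)^-1); split; first exact: quasi_convex_tnorm_le.
- exists (cball 0 (4 * n%:R)^-1); split; first exact: cball_open.
  + by apply: cball_center; rewrite invr_gt0; lra.
  + by move=> t /ltW.
- by move=> t t_le; apply: eU; apply: le_lt_trans r_lt_e.
Qed.

Lemma circ_in_Q : in_Q circ_opens.
Proof.
by split; [exact: circ_top_group | exact: circ_hausdorff | exact: circ_locally_quasi_convex].
Qed.

(** * Bicharacters and tensor products *)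

Section Homomorphisms.
Variables (A B : zmodType) (f : A -> B).
Hypothesis f_hom : is_hom +%R +%R f.

Let f0 : f 0 = 0.
Proof. by apply: (addrI (f 0)); rewrite -f_hom !addr0. Qed.

Definition hom_additive : {additive A -> B} :=
  HB.pack f (GRing.isNmodMorphism.Build A B f (f0, f_hom)).

Lemma hom0 : f 0 = 0.
Proof. exact: (raddf0 hom_additive). Qed.

Lemma homB (x y : A) : f (x - y) = f x - f y.
Proof. exact: (raddfB hom_additive). Qed.

Lemma homMz (x : A) (k : int) : f (x *~ k) = f x *~ k.
Proof. exact: (raddfMz hom_additive). Qed.

Lemma hom_sum (I : Type) (r : seq I) (F : I -> A) :
  f (\sum_(i <- r) F i) = \sum_(i <- r) f (F i).
Proof. exact: (raddf_sum hom_additive). Qed.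

End Homomorphisms.

Lemma hom_of_morphB (A B : zmodType) (f : A -> B) :
  {morph f : x y / x - y} -> is_hom +%R +%R f.
Proof. by move=> fB; exact: (raddfD (HB.pack f (GRing.isZmodMorphism.Build A B f fB))). Qed.

Lemma freeg_hom_eq (K : choiceType) (M : zmodType) (f g : {freeg K} -> M) :
  is_hom +%R +%R f -> is_hom +%R +%R g ->
  (forall k, f << k >> = g << k >>) -> f =1 g.
Proof.
move=> f_hom g_hom fg D; rewrite -(freeg_sumE D) !hom_sum //.
apply: eq_bigr => k _; rewrite -[coeff k D]intz -freegU_mulz.
by rewrite !homMz // fg.
Qed.

Lemma bichar_comp (G H : zmodType) (OG : opens G) (OH : opens H) (L : Type)
    (addL : L -> L -> L) (OL : opens L) (zeroL : L) (b : G -> H -> L) (chi : L -> circ) :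
  cont_bihom OG OH addL OL zeroL b -> character addL OL chi -> chi zeroL = 0 ->
  bichar OG OH (fun x y => chi (b x y)).
Proof.
move=> [b_homr b_homl [b00 b_cont0]] [chi_hom chi_cont] chi0; split.
- move=> x; have [bx_hom bx_cont] := b_homr x; split.
  + by move=> y y'; rewrite bx_hom chi_hom.
  + exact: continuous_comp bx_cont chi_cont.
- move=> y; have [by_hom by_cont] := b_homl y; split.
  + by move=> x x'; rewrite by_hom chi_hom.
  + exact: continuous_comp by_cont chi_cont.
- split; first by rewrite b00 chi0.
  move=> V OV V0; have [U [OU U0 UV]] := b_cont0 _ (chi_cont V OV) V0.
  by exists U; split.
Qed.

Lemma continuous_subr (G : zmodType) (OG : opens G) (a : G) :
  top_group OG -> continuous OG OG (fun x => x - a).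
Proof. by move=> [tG sub_cont] V OV; exact: continuous_pairr tG _ (sub_cont V OV). Qed.

Lemma bihom_expand (G H L : zmodType) (b : G -> H -> L) :
  (forall x, is_hom +%R +%R (b x)) -> (forall y, is_hom +%R +%R (b^~ y)) ->
  forall x y u v, b (u + x) (v + y) = b u v + b u y + b x v + b x y.
Proof.
move=> b_homr b_homl x y u v.
have -> : b (u + x) (v + y) = b u (v + y) + b x (v + y) := b_homl (v + y) u x.
by rewrite !b_homr addrA.
Qed.

Lemma bichar_continuous (G H : zmodType) (OG : opens G) (OH : opens H) (b : G -> H -> circ) :
  top_group OG -> top_group OH -> bichar OG OH b ->
  continuous (prod_top OG OH) circ_opens (fun p => b p.1 p.2).
Proof.
move=> tgG tgH [b_homr b_homl [b00 b_cont0]].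
have [tG _] := tgG; have [tH _] := tgH; have [_ OG_I _] := tG; have [_ OH_I _] := tH.
move=> V OV; apply: prod_top_of_rect => -[x y] /= Vxy.
have [e [e_gt0 eV]] := OV _ Vxy; have e3_gt0 : 0 < e / 3 by rewrite divr_gt0.
pose small := cball 0 (e / 3).
have b00_small : small (b 0 0) by rewrite b00; exact: cball_center.
have [U [OU U0 U_small]] := b_cont0 _ (@cball_open 0 (e / 3)) b00_small.
have [A0 [B0 [OA0 OB0 A00 B00 AB0_U]]] := rect_of_prod_top tG tH OU U0.
have [bx_hom bx_cont] := b_homr x; have [by_hom by_cont] := b_homl y.
pose A u := A0 u /\ small (b u y); pose B v := B0 v /\ small (b x v).
have OA : OG A by apply: OG_I => //; exact: by_cont (@cball_open 0 (e / 3)).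
have OB : OH B by apply: OH_I => //; exact: bx_cont (@cball_open 0 (e / 3)).
exists (fun x' => A (x' - x)), (fun y' => B (y' - y)); split => /=.
- exact: continuous_subr tgG _ OA.
- exact: continuous_subr tgH _ OB.
- by rewrite subrr; split => //; rewrite /small (hom0 by_hom); exact: cball_center.
- by rewrite subrr; split => //; rewrite /small (hom0 bx_hom); exact: cball_center.
move=> [x' y'] /= [A0u uy_small] [B0v xv_small]; apply: eV.
have uv_small : small (b (x' - x) (y' - y)) by apply: (U_small (_, _)); exact: AB0_U.
rewrite -(subrK x x') -(subrK y y') bihom_expand; last 2 first.
- by move=> z; case: (b_homr z).
- by move=> z; case: (b_homl z).
rewrite cdistE addrK.
move: uv_small uy_small xv_small; rewrite /small /cball -!/(tnorm _) => uv uy xv.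
have := tnormD (b (x' - x) (y' - y) + b (x' - x) y) (b x (y' - y)).
have := tnormD (b (x' - x) (y' - y)) (b (x' - x) y).
lra.
Qed.

Section TensorProduct.
Variables (G H : zmodType).
Local Notation pi := (\pi_(tensor G H)).

Lemma pi_tensor_eqP (z w : FA G H) : pi z = pi w <-> N (z - w).
Proof. by split => [/eqmodP/asboolP | Nzw]; last by apply/eqmodP/asboolP. Qed.

Lemma ND (z w : FA G H) : N z -> N w -> N (z + w).
Proof. by move=> Nz Nw; have := NB Nz (NB (@N0 G H) Nw); rewrite sub0r opprK. Qed.

Lemma N_of_gen (z : FA G H) : N_gen z -> N z.
Proof. by move=> gen_z S _ _; exact. Qed.

Lemma N_repr_pi (z : FA G H) : N (repr (pi z) - z).
Proof. by apply/pi_tensor_eqP; rewrite reprK. Qed.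

Lemma tensor_add_pi (z w : FA G H) : tensor_add (pi z) (pi w) = pi (z + w).
Proof.
rewrite /tensor_add; apply/pi_tensor_eqP; rewrite opprD addrACA.
exact: ND (N_repr_pi z) (N_repr_pi w).
Qed.

Lemma tensor_map_hom2 (x : G) : is_hom +%R (@tensor_add G H) (tensor_map x).
Proof.
move=> y y'; rewrite /tensor_map tensor_add_pi; apply/pi_tensor_eqP; apply: N_of_gen.
by right; exists x, y, y'; rewrite opprD addrA.
Qed.

Lemma tensor_map_hom1 (y : H) : is_hom +%R (@tensor_add G H) (fun x => tensor_map x y).
Proof.
move=> x x'; rewrite /tensor_map tensor_add_pi; apply/pi_tensor_eqP; apply: N_of_gen.
by left; exists x, x', y; rewrite opprD addrA.
Qed.

Lemma character_pi_hom (chi : tensor G H -> circ) :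
  is_hom (@tensor_add G H) tadd chi -> is_hom +%R +%R (fun z => chi (pi z)).
Proof. by move=> chi_hom z w; rewrite -tensor_add_pi chi_hom. Qed.

Lemma tensor_character_eq (chi psi : tensor G H -> circ) :
  is_hom (@tensor_add G H) tadd chi -> is_hom (@tensor_add G H) tadd psi ->
  (forall x y, chi (tensor_map x y) = psi (tensor_map x y)) -> chi = psi.
Proof.
move=> chi_hom psi_hom chi_psi; apply: funext => t; rewrite -(reprK t).
apply: freeg_hom_eq (character_pi_hom chi_hom) (character_pi_hom psi_hom) _ _.
by move=> [x y]; exact: chi_psi.
Qed.

Variables (OG : opens G) (OH : opens H).

Lemma sigma_continuous : continuous (prod_top OG OH) (FA_opens OG OH) (@sigma G H).
Proof.
apply: continuous_generated; first exact: generated_topology.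
by move=> A [O [_ sigma_cont OA]]; exact: sigma_cont.
Qed.

Lemma tensor_map_cont_bihom : is_topology OG -> is_topology OH ->
  cont_bihom OG OH (@tensor_add G H) (tensor_opens OG OH) (tensor_map 0 0) (@tensor_map G H).
Proof.
move=> tG tH.
have tensor_cont : continuous (prod_top OG OH) (tensor_opens OG OH)
    (fun p => tensor_map p.1 p.2).
  by move=> V OV; apply: opens_ext (sigma_continuous OV) _ => -[].
split.
- move=> x; split; first exact: tensor_map_hom2.
  exact: continuous_comp (@continuous_pairl _ _ OG OH x tH) tensor_cont.
- move=> y; split; first exact: tensor_map_hom1.
  exact: continuous_comp (@continuous_pairr _ _ OG OH y tG) tensor_cont.
- by split; last exact: continuous_atW.
Qed.

End TensorProduct.

Definition initial {A T : Type} (OT : opens T) (f : A -> T) : opens A :=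
  fun U => exists V, OT V /\ forall z, U z <-> V (f z).

Lemma initial_continuous {A T : Type} (OT : opens T) (f : A -> T) :
  continuous (initial OT f) OT f.
Proof. by move=> V OV; exists V. Qed.

Lemma initial_topology {A T : Type} (OT : opens T) (f : A -> T) :
  is_topology OT -> is_topology (initial OT f).
Proof.
move=> [OT_T OT_I OT_U]; split; first by exists (fun _ => True).
- move=> U1 U2 [V1 [OV1 UV1]] [V2 [OV2 UV2]].
  by exists (fun t => V1 t /\ V2 t); split; [exact: OT_I | move=> z; rewrite UV1 UV2].
- move=> F F_open; exists (fun t => exists V, [/\ OT V, F (fun z => V (f z)) & V t]).
  split.
  + apply: opens_ext (OT_U (fun V => OT V /\ F (fun z => V (f z))) _) _; first by move=> V [].
    by move=> t; split => [[V [[? ?] ?]]|[V [? ? ?]]]; exists V.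
  + move=> z; split; last by case=> V [_ FV Vfz]; exists (fun z => V (f z)).
    case=> U [FU Uz]; have [V [OV UV]] := F_open U FU.
    exists V; split => //; last by rewrite -UV.
    suff -> : (fun z => V (f z)) = U by [].
    by apply: funext => w; apply: propext; rewrite UV.
Qed.

Lemma initial_top_group (A T : zmodType) (OT : opens T) (f : A -> T) :
  top_group OT -> is_hom +%R +%R f -> top_group (initial OT f).
Proof.
move=> [tT sub_cont] f_hom; split; first exact: initial_topology.
move=> U [V [OV UV]].
have ff_cont : continuous (prod_top (initial OT f) (initial OT f)) (prod_top OT OT)
    (fun p => (f p.1, f p.2)).
  apply: continuous_generated; first exact: generated_topology.
  move=> _ [[W [OW ->]]|[W [OW ->]]] /=; apply: generated_open.
  + by left; exists (fun z => W (f z)); split => //; exists W.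
  + by right; exists (fun z => W (f z)); split => //; exists W.
by apply: opens_ext (ff_cont _ (sub_cont V OV)) _ => p /=; rewrite UV (homB f_hom).
Qed.

Section BicharacterLift.
Variables (G H : zmodType) (OG : opens G) (OH : opens H) (b : G -> H -> circ).

Definition bichar_lift : FA G H -> circ := @fglift int (zmodule circ) _ (fun p => b p.1 p.2).

Lemma bichar_lift_hom : is_hom +%R +%R bichar_lift.
Proof. by apply: hom_of_morphB => z w; exact: (@lift_is_additive int _ (zmodule circ)). Qed.

Lemma bichar_lift_sigma (x : G) (y : H) : bichar_lift (sigma (x, y)) = b x y.
Proof. by rewrite /bichar_lift /sigma liftU scale1r. Qed.

Hypothesis b_bichar : bichar OG OH b.

Lemma bichar_lift_N (z : FA G H) : N z -> bichar_lift z = 0.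
Proof.
have [b_homr b_homl _] := b_bichar; have lift_hom := bichar_lift_hom.
move=> Nz; apply: (Nz (fun z => bichar_lift z = 0)); first exact: hom0.
- by move=> u v u0 v0; rewrite homB // u0 v0 subrr.
- move=> _ [[x [x' [y ->]]]|[x [y [y' ->]]]]; rewrite !homB // !bichar_lift_sigma.
  + by have [-> _] := b_homl y; rewrite taddE addrAC addrK subrr.
  + by have [-> _] := b_homr x; rewrite taddE addrAC addrK subrr.
Qed.

Lemma bichar_lift_continuous : top_group OG -> top_group OH ->
  continuous (FA_opens OG OH) circ_opens bichar_lift.
Proof.
move=> tgG tgH V OV; apply: generated_open.
exists (initial circ_opens bichar_lift); split; last exact: initial_continuous.
- exact: initial_top_group circ_top_group bichar_lift_hom.
- move=> U [W [OW UW]].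
  apply: opens_ext (bichar_continuous tgG tgH b_bichar OW) _ => -[x y] /=.
  by rewrite UW bichar_lift_sigma.
Qed.

End BicharacterLift.

Lemma bichar_tensor_character (G H : zmodType) (OG : opens G) (OH : opens H)
    (b : G -> H -> circ) :
  top_group OG -> top_group OH -> bichar OG OH b ->
  exists2 chi, character (@tensor_add G H) (tensor_opens OG OH) chi
             & forall x y, chi (tensor_map x y) = b x y.
Proof.
move=> tgG tgH b_bichar; have lift_hom := bichar_lift_hom b.
pose chi (t : tensor G H) := bichar_lift b (repr t).
have chi_pi z : chi (\pi_(tensor G H) z) = bichar_lift b z.
  apply/eqP; rewrite -subr_eq0 -(homB lift_hom); apply/eqP.
  exact: (bichar_lift_N b_bichar (N_repr_pi z)).
exists chi; last by move=> x y; rewrite /tensor_map chi_pi bichar_lift_sigma.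
split; first by move=> s t; rewrite /tensor_add chi_pi lift_hom.
move=> V OV; apply: opens_ext (bichar_lift_continuous b_bichar tgG tgH OV) _ => z.
by rewrite chi_pi.
Qed.

Lemma tensor_dual_iso (G H : zmodType) (OG : opens G) (OH : opens H) :
  top_group OG -> top_group OH ->
  exists phi : (tensor G H -> circ) -> (G -> H -> circ),
    group_iso_on (character (@tensor_add G H) (tensor_opens OG OH))
                 (bichar OG OH) fadd fadd2 phi.
Proof.
move=> tgG tgH; have [tG _] := tgG; have [tH _] := tgH.
exists (fun chi x y => chi (tensor_map x y)); split => //.
- move=> chi chi_char; have [chi_hom _] := chi_char.
  apply: (bichar_comp (tensor_map_cont_bihom tG tH) chi_char).
  apply: (addIr (chi (tensor_map 0 0))).
  by rewrite add0r -taddE -chi_hom -tensor_map_hom2 addr0.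
- move=> chi psi [chi_hom _] [psi_hom _] chi_psi.
  apply: (tensor_character_eq chi_hom psi_hom) => x y.
  exact: (congr1 (fun F => F x y) chi_psi).
- move=> b /(bichar_tensor_character tgG tgH) [chi chi_char chi_b].
  by exists chi => //; apply: funext => x; apply: funext => y.
Qed.

Lemma Q_tensor_dual_iso (G H : zmodType) (OG : opens G) (OH : opens H)
    (P : zmodType) (OP : opens P) (bP : G -> H -> P) :
  is_Q_tensor OG OH OP bP ->
  exists phi : (P -> circ) -> (G -> H -> circ),
    group_iso_on (character +%R OP) (bichar OG OH) fadd fadd2 phi.
Proof.
move=> [_ bP_bihom bP_universal].
have bichar_bP chi : character +%R OP chi -> bichar OG OH (fun x y => chi (bP x y)).
  by move=> chi_char; apply: (bichar_comp bP_bihom chi_char); case: chi_char => /hom0.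
exists (fun chi x y => chi (bP x y)); split => //.
- move=> chi psi chi_char [psi_hom psi_cont] chi_psi.
  have [_ uniq] := bP_universal _ _ _ circ_in_Q (bichar_bP chi chi_char).
  have [chi_hom chi_cont] := chi_char.
  apply: (uniq _ _ chi_hom chi_cont _ psi_hom psi_cont) => // x y.
  exact: (congr1 (fun F => F x y) chi_psi).
- move=> b b_bichar.
  have [[chi [chi_hom chi_cont chi_b]] _] := bP_universal _ _ _ circ_in_Q b_bichar.
  by exists chi => //; apply: funext => x; apply: funext => y.
Qed.

Theorem proposition3p5 (G H : zmodType) (OG : opens G) (OH : opens H) :
  in_Q OG -> in_Q OH ->
  (* the dual of G (x) H is isomorphic to X(G,H) *)
  (exists phi : (tensor G H -> circ) -> (G -> H -> circ),
     group_iso_on (character (@tensor_add G H) (tensor_opens OG OH))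
                  (bichar OG OH) fadd fadd2 phi) /\
  (* the dual of G (x)_Q H is isomorphic to X(G,H) *)
  (forall (P : zmodType) (OP : opens P) (bP : G -> H -> P),
     is_Q_tensor OG OH OP bP ->
     exists phi : (P -> circ) -> (G -> H -> circ),
       group_iso_on (character +%R OP) (bichar OG OH) fadd fadd2 phi).
Proof.
move=> [tgG _ _] [tgH _ _]; split; first exact: tensor_dual_iso.
by move=> P OP bP; exact: Q_tensor_dual_iso.
Qed.
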